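(* Let $\Delta\subset\mathbb{S}^2$ be a planar flag complex and let $(\Delta_1,\Delta_2)$ be a strong visual decomposition of $\Delta$ along an induced 4-cycle $\sigma$. If $R$ is a region (connected component) of $\mathbb{S}^2-\Delta$, then $R$ is a region of $\mathbb{S}^2-\Delta_1$ or a region of $\mathbb{S}^2-\Delta_2$.
   Context: A flag complex is a simplicial complex in which every complete subgraph of the 1-skeleton spans a simplex. For $\Delta\subset\mathbb{S}^2$, an induced 4-cycle $\sigma$ strongly separates $\Delta$ if $\Delta$ meets both components $U_1,U_2$ of $\mathbb{S}^2-\sigma$. In that case, letting $\Delta_i$ be $\sigma$ together with the components of $\Delta-\sigma$ lying in $U_i$, one has $\Delta=\Delta_1\cup\Delta_2$ and $\Delta_1\cap\Delta_2=\sigma$; the pair $(\Delta_1,\Delta_2)$ is called the strong visual decomposition of $\Delta$ along $\sigma$. *)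

From HB Require Import structures.
From mathcomp Require Import all_boot all_order all_algebra.
From mathcomp Require Import all_classical all_reals all_analysis.

Set Implicit Arguments. Unset Strict Implicit. Unset Printing Implicit Defensive.
Import Order.TTheory GRing.Theory Num.Theory numFieldNormedType.Exports.
Local Open Scope ring_scope.

Definition sphere2 (R : realType) : set 'rV[R]_3 :=
  [set x | \sum_(i < 3) x ord0 i ^+ 2 = 1]%classic.

Definition simplicial_complex (n : nat) (D : {set {set 'I_n}}) : Prop :=
  (forall s, s \in D -> s != finset.set0) /\
  (forall s t : {set 'I_n}, s \in D -> t \subset s -> t != finset.set0 -> t \in D).

Definition flag (n : nat) (D : {set {set 'I_n}}) : Prop :=
  forall s : {set 'I_n}, s != finset.set0 ->
    (forall i j : 'I_n, i \in s -> j \in s -> [set i; j] \in D) -> s \in D.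

Definition subcomplex (n : nat) (K D : {set {set 'I_n}}) : Prop :=
  simplicial_complex K /\ K \subset D.

(* Geometric realization |K| of a complex K on 'I_n, as a subset of R^n:
   points with nonnegative barycentric coordinates summing to 1 whose
   support is a face of K. *)
Definition realization (R : realType) (n : nat) (K : {set {set 'I_n}})
  : set 'rV[R]_n :=
  [set p | (forall i, 0 <= p ord0 i) /\ \sum_(i < n) p ord0 i = 1 /\
           finset.finset (fun i => p ord0 i != 0) \in K]%classic.

(* f is a topological embedding of |D| into S^2 (|D| is compact and S^2 is
   Hausdorff, so a continuous injection is an embedding). *)
Definition embedding_in_sphere (R : realType) (n : nat) (D : {set {set 'I_n}})
  (f : 'rV[R]_n -> 'rV[R]_3) : Prop :=
  ({within @realization R _ D, continuous f})%classic /\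
  (forall p q, @realization R _ D p -> @realization R _ D q -> f p = f q -> p = q) /\
  (f @` @realization R _ D `<=` @sphere2 R)%classic.

Definition cycle4 (n : nat) (a b c d : 'I_n) : {set {set 'I_n}} :=
  [set [set a]; [set b]; [set c]; [set d];
       [set a; b]; [set b; c]; [set c; d]; [set d; a]].

Definition induced_4cycle (n : nat) (D : {set {set 'I_n}}) (a b c d : 'I_n)
  : Prop :=
  uniq [:: a; b; c; d] /\
  [set a; b] \in D /\ [set b; c] \in D /\ [set c; d] \in D /\ [set d; a] \in D /\
  [set a; c] \notin D /\ [set b; d] \notin D.

Local Open Scope classical_set_scope.

Definition region (R : realType) (X C : set 'rV[R]_3) : Prop :=
  exists2 x, (@sphere2 R `\` X) x &
    C = connected_component (@sphere2 R `\` X) x.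

(* Given the images Dl = |Delta| and S = |sigma| in S^2, and a component U
   of S^2 - S, the piece of the strong visual decomposition on the U side:
   S together with the components of Dl - S lying in U. *)
Definition visual_piece (R : realType) (Dl S U : set 'rV[R]_3)
  : set 'rV[R]_3 :=
  S `|` [set y | (Dl `\` S) y /\ connected_component (Dl `\` S) y `<=` U].

From HB Require Import structures.
From mathcomp Require Import all_boot all_order all_algebra.
From mathcomp Require Import all_classical all_reals all_analysis.
Import numFieldNormedType.Exports.
Local Open Scope classical_set_scope.
Local Open Scope ring_scope.

(* Write S = |sigma|, D = |Delta|, and let U be the component of S^2 - S
   containing a point of the region Rg of S^2 - D; let P be the piece of the
   decomposition on the U side, so S <= P <= D. The component of S^2 - P
   through that point contains Rg. Conversely it avoids S, hence stays in U;
   a point of D in it would lie off S, and its component in D - S, being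
   connected and disjoint from S, would stay in U too, putting the point in P.
   So that component avoids D and equals Rg. *)

Section ConnectedComponent.
Variable T : topologicalType.
Implicit Types A B : set T.

Lemma connected_component_subset A B x :
  connected_component A x `<=` B ->
  connected_component A x `<=` connected_component B x.
Proof.
move=> AxB y [C [Cx CA Cc] Cy]; exists C => //; split => //.
exact: subset_trans (connected_component_max Cx CA Cc) AxB.
Qed.

Lemma connected_componentS A B x :
  A `<=` B -> connected_component A x `<=` connected_component B x.
Proof.
move=> AB; apply: connected_component_subset.
exact: subset_trans (@connected_component_sub _ _ _) AB.
Qed.

End ConnectedComponent.

Section VisualPiece.
Variable R : realType.
Variables (Dl S U : set 'rV[R]_3).
Hypothesis SD : S `<=` Dl.
Hypothesis Dsph : Dl `<=` @sphere2 R.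

Lemma visual_piece_sub : visual_piece Dl S U `<=` Dl.
Proof. by move=> y [/SD|[[]]]. Qed.

Lemma visual_piece_mem y :
  U = connected_component (@sphere2 R `\` S) y -> (Dl `\` S) y ->
  visual_piece Dl S U y.
Proof.
move=> UE DSy; right; split => //; rewrite UE.
by apply: connected_componentS; apply: setSD.
Qed.

Hypothesis regionU : region S U.

Lemma connected_component_setD_visual_piece x :
  U x ->
  connected_component (@sphere2 R `\` Dl) x =
  connected_component (@sphere2 R `\` visual_piece Dl S U) x.
Proof.
move=> Ux; have [x0 _ Ux0] := regionU.
have UE y : U y -> U = connected_component (@sphere2 R `\` S) y.
  by move=> Uy; rewrite Ux0; apply: same_connected_component; rewrite -Ux0.
apply/seteqP; split.
  by apply: connected_componentS; apply: setDS; exact: visual_piece_sub.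
apply: connected_component_subset => y Cy.
have Uy : U y.
  rewrite (UE x Ux); apply: connected_componentS Cy.
  by apply: setDS => z Sz; left.
have [sy nPy] := connected_component_sub Cy.
have nSy : ~ S y by move=> Sy; apply: nPy; left.
by split => // Dy; apply: nPy; apply: visual_piece_mem (UE y Uy) _.
Qed.

Lemma region_visual_piece Rg :
  region Dl Rg -> Rg `&` U !=set0 -> region (visual_piece Dl S U) Rg.
Proof.
move=> [x _ RgE] [y [Rgy Uy]].
have [sy nDy] : (@sphere2 R `\` Dl) y.
  by rewrite RgE in Rgy; exact: connected_component_sub Rgy.
exists y; first by split => // /visual_piece_sub.
rewrite -connected_component_setD_visual_piece // RgE.
by apply: same_connected_component; rewrite -RgE.
Qed.

End VisualPiece.

Lemma realizationS {R : realType} {n : nat} {K D : {set {set 'I_n}}} :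
  K \subset D -> @realization R _ K `<=` realization D.
Proof. by move=> /fintype.subsetP KD p [p0 [p1 /KD]]. Qed.

Lemma cycle4_sub {n : nat} {D : {set {set 'I_n}}} {a b c d : 'I_n} :
  simplicial_complex D -> induced_4cycle D a b c d -> cycle4 a b c d \subset D.
Proof.
move=> [_ closedD] [_ [ab [bc [cd [da _]]]]].
have vertex (u v : 'I_n) : ([set u; v] \in D -> [set u] \in D)%SET.
  move=> uv; apply: closedD uv _ _; first by rewrite finset.sub1set finset.set21.
  by apply/finset.set0Pn; exists u; rewrite finset.set11.
apply/fintype.subsetP => s; rewrite !inE; do ?case/orP; move/eqP => -> //.
- exact: vertex ab.
- exact: vertex bc.
- exact: vertex cd.
- exact: vertex da.
Qed.

Theorem lemma4p14 (R : realType) (n : nat) (D : {set {set 'I_n}})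
  (f : 'rV[R]_n -> 'rV[R]_3) (a b c d : 'I_n) (U1 U2 : set 'rV[R]_3) :
  simplicial_complex D -> flag D -> embedding_in_sphere D f ->
  induced_4cycle D a b c d ->
  (* U1, U2 are the two components of S^2 - |sigma| *)
  region (f @` @realization R _ (cycle4 a b c d)) U1 ->
  region (f @` @realization R _ (cycle4 a b c d)) U2 ->
  U1 <> U2 ->
  @sphere2 R `\` (f @` @realization R _ (cycle4 a b c d)) = U1 `|` U2 ->
  (* sigma strongly separates Delta *)
  (f @` @realization R _ D) `&` U1 !=set0 ->
  (f @` @realization R _ D) `&` U2 !=set0 ->
  forall Rg : set 'rV[R]_3,
    region (f @` @realization R _ D) Rg ->
    region (visual_piece (f @` @realization R _ D)
              (f @` @realization R _ (cycle4 a b c d)) U1) Rg \/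
    region (visual_piece (f @` @realization R _ D)
              (f @` @realization R _ (cycle4 a b c d)) U2) Rg.
Proof.
move=> complexD _ [_ [_ Dsph]] cycD regU1 regU2 _ cover _ _ Rg regRg.
have SD := image_subset f (realizationS (cycle4_sub complexD cycD)).
have [x [sx nDx] RgE] := regRg.
have Rgx : Rg x by rewrite RgE; apply: connected_component_refl.
have : (U1 `|` U2) x by rewrite -cover; split => // /SD.
by case=> Ux; [left|right]; apply: region_visual_piece => //; exists x.
Qed.
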